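(* In the SMA-DP-SGD setting below, fix an iteration $t$ and a realizable global prior private release history $\mathcal H_t$. Let $\varepsilon_{\mathrm{SGM}}(\lambda_{\mathrm R};q,\sigma)$ denote any valid Rényi-DP upper bound at order $\lambda_{\mathrm R}>1$ for the Poisson-subsampled Gaussian mechanism with subsampling probability $q$ and noise-to-sensitivity ratio $\sigma$, and define $$\sigma_{\mathrm{eff},t}=\frac{1}{\beta\left(\sum_{g=1}^G\sigma_{t,g}^{-2}\right)^{1/2}}.$$ Then the joint release $$\tilde s_t=r_t(D;m_t,\mathcal H_t)+Z_t,\qquad Z_t\sim\mathcal N(0,\Sigma_t),$$ where $m_t$ is a Poisson mask with probability $q_t$, satisfies $\left(\lambda_{\mathrm R},\varepsilon_{\mathrm{SGM}}(\lambda_{\mathrm R};q_t,\sigma_{\mathrm{eff},t})\right)$-RDP for every $\lambda_{\mathrm R}>1$.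
   Context: SMA-DP-SGD setting: dataset $D=\{x_1,\dots,x_N\}$; adjacency is add/remove of one example. Parameters are partitioned into groups $g=1,\dots,G$ (dimension $d_g$, identity $I_g$), with clipping norms $C^{(g)}>0$, noise multipliers $\sigma_{t,g}>0$, and fixed mixing coefficient $\beta\in(0,1]$. At step $t$, a Poisson mask $m_t=(m_{t,1},\dots,m_{t,N})$ is drawn with $m_{t,i}\sim\mathrm{Bernoulli}(q_t)$ independently, and the same mask is used for all groups. For each group, $s_t^{(g)}(D;m_t)=\sum_i m_{t,i}\bar g_t^{(g)}(x_i)$, where $\bar g_t^{(g)}(x_i)=g_t^{(g)}(x_i)/\max(1,\|g_t^{(g)}(x_i)\|_2/C^{(g)})$ is the clipped per-example gradient of group $g$ at the current model $\theta_t$. The group query is $r_t^{(g)}(D;m_t,\mathcal H_t)=\beta s_t^{(g)}(D;m_t)+b_t^{(g)}(\mathcal H_t)$, where the memory branch $b_t^{(g)}$ is a deterministic function of the global prior private release history $\mathcal H_t$ (all previous noisy releases $\tilde s_r^{(h)}$, $r<t$), of the model state induced by them, and of public hyperparameters, and does not depend on the current data. The joint query is $r_t=(r_t^{(1)},\dots,r_t^{(G)})$ and $\Sigma_t=\operatorname{diag}(\sigma_{t,1}^2(C^{(1)})^2I_1,\ldots,\sigma_{t,G}^2(C^{(G)})^2I_G)$. *)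

From HB Require Import structures.
From mathcomp Require Import all_boot all_order all_algebra.
From mathcomp Require Import all_classical all_reals all_analysis.
Set Implicit Arguments. Unset Strict Implicit. Unset Printing Implicit Defensive.
Import Order.TTheory GRing.Theory Num.Theory.
Import numFieldNormedType.Exports.
Local Open Scope classical_set_scope.
Local Open Scope ring_scope.

Section Defs.
Variable R : realType.

Definition l2norm (T : finType) (v : T -> R) : R :=
  Num.sqrt (\sum_(k : T) v k ^+ 2).

Definition gnorm (d G : nat) (grp : 'I_d -> 'I_G) (g : 'I_G) (v : 'I_d -> R) : R :=
  Num.sqrt (\sum_(k < d | grp k == g) v k ^+ 2).

Definition clip (d G : nat) (grp : 'I_d -> 'I_G) (C : 'I_G -> R) (v : 'I_d -> R)
  : 'I_d -> R :=
  fun k => v k / Num.max 1 (gnorm grp (grp k) v / C (grp k)).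

Definition gauss (T : finType) (var mu : T -> R) (y : T -> R) : R :=
  \prod_(k : T) ((Num.sqrt (2 * pi * var k))^-1 *
                 expR (- (y k - mu k) ^+ 2 / (2 * var k))).

(* Density of  shift + sum_i m_i us_i + N(0, diag var),  m_i ~ Bernoulli(q) i.i.d. *)
Definition mixdens (T : finType) (q : R) (us : seq (T -> R)) (shift var : T -> R)
  (y : T -> R) : R :=
  \sum_(m : {ffun 'I_(size us) -> bool})
     (\prod_(i < size us) (if m i then q else 1 - q)) *
     gauss var (fun k => shift k + \sum_(i < size us | m i) tnth (in_tuple us) i k) y.

(* Lebesgue integral on R^T, written as the iterated (Tonelli) integral over
   the coordinates listed in s, starting from the point v. *)
Fixpoint iint (T : finType) (s : seq T) (f : (T -> R) -> \bar R) (v : T -> R)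
  : \bar R :=
  match s with
  | [::] => f v
  | t :: s' => (\int[lebesgue_measure]_x
                  iint s' f (fun k => if k == t then x else v k))%E
  end.

Definition integral_Rn (T : finType) (f : (T -> R) -> \bar R) : \bar R :=
  iint (enum T) f (fun _ => 0).

Definition renyi (T : finType) (lam : R) (p q : (T -> R) -> R) : \bar R :=
  match integral_Rn (fun y => ((p y) `^ lam * (q y) `^ (1 - lam))%:E) with
  | r%:E => (ln r / (lam - 1))%:E
  | +oo%E => +oo%E
  | -oo%E => -oo%E
  end.

End Defs.

Definition adjacent_ds (X : Type) (D D' : seq X) : Prop :=
  exists (x : X) (s1 s2 : seq X),
    (D = s1 ++ x :: s2 /\ D' = s1 ++ s2) \/ (D' = s1 ++ x :: s2 /\ D = s1 ++ s2).

(* e is a valid order-lam RDP bound for the Poisson-subsampled Gaussian mechanism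
   with sampling probability q and noise-to-sensitivity ratio s: in any dimension,
   for per-example contributions of l2 norm at most 1 (sensitivity 1), the release
   sum_i m_i v_i + N(0, s^2 I) has Renyi divergence at most e between adjacent_ds datasets. *)
Definition SGM_rdp_bound (R : realType) (lam q s e : R) : Prop :=
  forall (n : nat) (D D' : seq ('I_n -> R)),
    adjacent_ds D D' ->
    (forall i : 'I_(size (D ++ D')), l2norm (tnth (in_tuple (D ++ D')) i) <= 1) ->
    (renyi lam (mixdens q D (fun _ => 0%R) (fun _ => (s ^+ 2)%R))
               (mixdens q D' (fun _ => 0%R) (fun _ => (s ^+ 2)%R)) <= e%:E)%E.

Definition sigma_eff (R : realType) (G : nat) (beta : R) (sigma : 'I_G -> R) : R :=
  (beta * Num.sqrt (\sum_(g < G) (sigma g)^-2))^-1.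

(* Output density of the SMA-DP-SGD joint release at a fixed step:
   beta * sum_i m_i clip(grad x_i) + b + N(0, Sigma_t),
   Sigma_t = diag(sigma_g^2 C_g^2 on group g). *)
Definition sma_dens (R : realType) (X : Type) (d G : nat) (grp : 'I_d -> 'I_G)
  (C sigma : 'I_G -> R) (beta q : R) (grad : X -> 'I_d -> R) (b : 'I_d -> R)
  (D : seq X) : ('I_d -> R) -> R :=
  mixdens q (map (fun x k => beta * clip grp C (grad x) k) D) b
            (fun k => sigma (grp k) ^+ 2 * C (grp k) ^+ 2).

From Pilot Require Import Defs.
From HB Require Import structures.
From mathcomp Require Import all_boot all_order all_algebra.
From mathcomp Require Import all_classical all_reals all_analysis.
From mathcomp Require Import measurable_realfun.
From mathcomp Require Import ring.
Set Implicit Arguments. Unset Strict Implicit. Unset Printing Implicit Defensive.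
Import Order.TTheory GRing.Theory Num.Theory.
Local Open Scope ring_scope.
Local Open Scope classical_set_scope.
Import HBNNSimple.

(* Rescale coordinate k of the output space by w_k = sigma_eff / (sigma_g C_g), where g
   is the group of k, and translate by the memory branch. This turns the noise covariance
   Sigma_t into sigma_eff^2 I and every clipped, beta-scaled contribution into a vector of
   l2 norm at most 1, because sum_g (sigma_eff beta / sigma_g)^2 = 1. A coordinatewise
   affine bijection multiplies both output densities by the same Jacobian, so it leaves
   the Renyi divergence unchanged: the SMA release has the divergence of a
   Poisson-subsampled Gaussian mechanism with noise ratio sigma_eff and sensitivity 1. *)

(* The iterated integrals of [integral_Rn] need not be measurable in their outer
   variables, so scaling and change of variables are proved for arbitrary nonnegative
   integrands, through the supremum over simple functions below them. *)
Section nonneg_integral.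
Context d (T : measurableType d) (R : realType) (mu : {measure set T -> \bar R}).
Local Open Scope ereal_scope.
Implicit Types (f g : T -> \bar R).

Lemma ge0_le_integralT f g : (forall x, 0 <= f x) -> (forall x, f x <= g x) ->
  \int[mu]_x f x <= \int[mu]_x g x.
Proof.
move=> f0 fg; have g0 x : 0 <= g x by exact: le_trans (f0 x) (fg x).
rewrite !ge0_integralTE //; apply: ereal_sup_le => _ [h /= hf <-].
by exists h => //= x; exact: le_trans (hf x) (fg x).
Qed.

Lemma ge0_integralT_lub f (M : \bar R) : (forall x, 0 <= f x) ->
  (forall h : T -> \bar R, measurable_fun [set: T] h -> (forall x, 0 <= h x) ->
     (forall x, h x <= f x) -> \int[mu]_x h x <= M) ->
  \int[mu]_x f x <= M.
Proof.
move=> f0 hM; rewrite ge0_integralTE //; apply: ge_ereal_sup => _ [h /= hf <-].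
rewrite -integralT_nnsfun; apply: hM => //.
  exact/measurable_EFinP.
by move=> x; rewrite lee_fin.
Qed.

Lemma ge0_integralTZl_le (k : R) f : (0 < k)%R -> (forall x, 0 <= f x) ->
  \int[mu]_x (k%:E * f x) <= k%:E * \int[mu]_x f x.
Proof.
move=> k0 f0; have k'0 : (0 <= k^-1)%R by rewrite invr_ge0 ltW.
apply: ge0_integralT_lub => [x|h mh h0 hf]; first by rewrite mule_ge0 // lee_fin ltW.
have -> : \int[mu]_x h x = k%:E * \int[mu]_x (k^-1%:E * h x).
  by rewrite ge0_integralZl_EFin // muleA -EFinM divff ?gt_eqF // mul1e.
apply: lee_wpmul2l; first by rewrite lee_fin ltW.
apply: ge0_le_integralT => x; first by rewrite mule_ge0 // lee_fin.
rewrite -[f x]mul1e -(mulVf (lt0r_neq0 k0)) EFinM -muleA.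
by apply: lee_wpmul2l; rewrite ?lee_fin.
Qed.

Lemma ge0_integralTZl (k : R) f : (0 <= k)%R -> (forall x, 0 <= f x) ->
  \int[mu]_x (k%:E * f x) = k%:E * \int[mu]_x f x.
Proof.
move=> k0 f0; have [->|kneq0] := eqVneq k 0%R.
  by rewrite mul0e -(integral0 mu setT); apply: eq_integral => x _; rewrite mul0e.
have kgt0 : (0 < k)%R by rewrite lt_neqAle eq_sym kneq0.
have kf0 x : 0 <= k%:E * f x by rewrite mule_ge0.
apply/le_anti/andP; split; first exact: ge0_integralTZl_le.
have -> : \int[mu]_x f x = \int[mu]_x (k^-1%:E * (k%:E * f x)).
  by apply: eq_integral => x _; rewrite muleA -EFinM mulVf ?mul1e.
have k'0 : (0 < k^-1)%R by rewrite invr_gt0.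
apply: (@le_trans _ _ (k%:E * (k^-1%:E * \int[mu]_x (k%:E * f x)))).
  by apply: lee_wpmul2l; [rewrite lee_fin | exact: ge0_integralTZl_le].
by rewrite muleA -EFinM divff ?mul1e.
Qed.

End nonneg_integral.

Section lebesgue_affine.
Context (R : realType) (a c : R).
Hypothesis a0 : 0 < a.
Local Notation mu := (@lebesgue_measure R).
Local Notation phi := (fun x : R => a * x + c).

Let measurable_phi : measurable_fun [set: R] phi.
Proof. by apply: measurable_funD => //; exact: measurable_funM. Qed.

Lemma affine_preimage_itv_oc (u v : R) :
  phi @^-1` `]u, v] = `](u - c) / a, (v - c) / a].
Proof.
by apply/seteqP; split => x /=; rewrite !in_itv /= ltr_pdivrMr // ler_pdivlMr //
  (mulrC x) ltrBlDr lerBrDr.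
Qed.

Lemma lebesgue_measure_affine_preimage (A : set R) : measurable A ->
  mu A = (a%:E * mu (phi @^-1` A))%E.
Proof.
move=> mA; have := @lebesgue_measure_unique R (mscale (NngNum (ltW a0))
  (pushforward mu (phi : measurableTypeR R -> measurableTypeR R))) _ A mA.
apply=> X /ocitvP[->|[[u v] /= uv ->]].
  by rewrite /= /mscale/= /pushforward preimage_set0 !measure0 mule0.
rewrite /= /mscale/= /pushforward affine_preimage_itv_oc !lebesgue_measure_itv /=.
rewrite !lte_fin uv ltr_pM2r ?invr_gt0 // ltrD2r uv /= -EFinM; congr (_%:E).
by field; rewrite gt_eqF.
Qed.

Lemma ge0_integral_affine_measurable (g : R -> \bar R) :
  measurable_fun [set: R] g -> (forall x, 0 <= g x)%E ->
  (\int[mu]_x (a%:E * g (phi x)) = \int[mu]_x g x)%E.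
Proof.
move=> mg g0; have a'0 : 0 <= a^-1 by rewrite invr_ge0 ltW.
have mgphi : measurable_fun [set: R] (g \o phi) by exact: measurableT_comp.
rewrite ge0_integralZl_EFin //; last exact: ltW.
have -> : (\int[mu]_x g (phi x) = \int[mu]_(x in phi @^-1` setT) (g \o phi) x)%E by [].
rewrite -(@ge0_integral_pushforward _ _ (measurableTypeR R) (measurableTypeR R) R phi
  measurable_phi mu setT g) //.
rewrite (eq_measure_integral (mscale (NngNum a'0) mu)); last first.
  move=> A mA _; rewrite /= /mscale/= lebesgue_measure_affine_preimage //.
  by rewrite muleA -EFinM mulVf ?gt_eqF // mul1e.
by rewrite ge0_integral_mscale //= muleA -EFinM divff ?gt_eqF // mul1e.
Qed.

Lemma ge0_integral_affine_le (f : R -> \bar R) : (forall x, 0 <= f x)%E ->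
  (\int[mu]_x (a%:E * f (phi x)) <= \int[mu]_x f x)%E.
Proof.
move=> f0; apply: ge0_integralT_lub => [x|h mh h0 hf].
  by rewrite mule_ge0 // lee_fin ltW.
pose psi y := a^-1 * (y - c).
have phiK x : psi (phi x) = x by rewrite /psi; field; rewrite gt_eqF.
have psiK y : phi (psi y) = y by rewrite /psi; field; rewrite gt_eqF.
pose h' y := (a^-1%:E * h (psi y))%E.
have h'0 y : (0 <= h' y)%E by rewrite mule_ge0 // lee_fin invr_ge0 ltW.
have -> : (\int[mu]_x h x = \int[mu]_x (a%:E * h' (phi x)))%E.
  by apply: eq_integral => x _; rewrite /h' phiK muleA -EFinM divff ?gt_eqF ?mul1e.
rewrite ge0_integral_affine_measurable //; last first.
  apply: measurable_funeM; apply: measurableT_comp mh _.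
  by apply: measurable_funM => //; exact: measurable_funB.
apply: ge0_le_integralT => // y; have := hf (psi y); rewrite psiK => hfy.
rewrite -[f y]mul1e -(mulVf (lt0r_neq0 a0)) EFinM -muleA.
by apply: lee_wpmul2l => //; rewrite lee_fin invr_ge0 ltW.
Qed.

End lebesgue_affine.

Lemma ge0_integral_affine (R : realType) (a c : R) (f : R -> \bar R) :
  0 < a -> (forall x, 0 <= f x)%E ->
  (\int[lebesgue_measure]_x (a%:E * f (a * x + c)%R) = \int[lebesgue_measure]_x f x)%E.
Proof.
move=> a0 f0; apply/le_anti/andP; split; first exact: ge0_integral_affine_le.
(* The reverse inequality is the same one for the inverse affine map. *)
have a'0 : 0 < a^-1 by rewrite invr_gt0.
have af0 x : (0 <= a%:E * f (a * x + c)%R)%E by rewrite mule_ge0 // lee_fin ltW.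
have -> : (\int[lebesgue_measure]_y f y =
    \int[lebesgue_measure]_y (a^-1%:E * (a%:E * f (a * (a^-1 * y + - (c / a)) + c)%R)))%E.
  apply: eq_integral => y _; rewrite muleA -EFinM mulVf ?gt_eqF // mul1e.
  by congr (f _); field; rewrite gt_eqF.
exact: ge0_integral_affine_le.
Qed.

Section iterated_integral.
Context (R : realType) (T : finType).
Local Open Scope ereal_scope.
Implicit Types (s : seq T) (f : (T -> R) -> \bar R) (v : T -> R).

Lemma iint_ge0 s f v : (forall y, 0 <= f y) -> 0 <= iint s f v.
Proof.
move=> f0; elim: s v => [|t s IH] v /=; first exact: f0.
by apply: integral_ge0 => x _; exact: IH.
Qed.

Lemma iintZl s f v (k : R) : (0 <= k)%R -> (forall y, 0 <= f y) ->
  iint s (fun y => k%:E * f y) v = k%:E * iint s f v.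
Proof.
move=> k0 f0; elim: s v => [|t s IH] v //=.
rewrite -ge0_integralTZl // => [|x]; last exact: iint_ge0.
by apply: eq_integral => x _; rewrite IH.
Qed.

Lemma eq_iint_base s f v v' : (forall k, k \notin s -> v k = v' k) ->
  iint s f v = iint s f v'.
Proof.
elim: s v v' => [|t s IH] v v' vv' /=.
  by congr (f _); apply: funext => k; exact: vv'.
apply: eq_integral => x _; apply: IH => k ks /=.
by case: ifP => // /negbT kt; apply: vv'; rewrite inE negb_or kt.
Qed.

Lemma iint_affine s f v (w c : T -> R) :
  (forall k, (0 < w k)%R) -> (forall y, 0 <= f y) ->
  iint s (fun y => (\prod_(k <- s) w k)%:E * f (fun k => w k * y k + c k)%R) v
  = iint s f (fun k => w k * v k + c k)%R.
Proof.
move=> w0; elim: s f v => [|t s IH] f v f0; first by rewrite /= big_nil mul1e.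
have wtf0 y : 0 <= (w t)%:E * f y by rewrite mule_ge0 // lee_fin ltW.
rewrite [LHS]/=.
pose G z := iint s f (fun k => if k == t then z else w k * v k + c k)%R.
transitivity (\int[lebesgue_measure]_x ((w t)%:E * G (w t * x + c t)%R)).
  apply: eq_integral => x _.
  have -> : (fun y => (\prod_(k <- t :: s) w k)%:E * f (fun k => w k * y k + c k)%R)
    = fun y => (\prod_(k <- s) w k)%:E * ((w t)%:E * f (fun k => w k * y k + c k)%R).
    by apply: funext => y; rewrite big_cons EFinM -muleA muleCA.
  have /= -> := IH (fun z => (w t)%:E * f z) (fun k => if k == t then x else v k) wtf0.
  rewrite iintZl ?ltW //; congr (_ * iint _ _ _).
  by apply: funext => k; case: eqP => [->|].
by apply: ge0_integral_affine => // z; exact: iint_ge0.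
Qed.

Lemma integral_Rn_affine (w c : T -> R) f :
  (forall k, (0 < w k)%R) -> (forall y, 0 <= f y) ->
  integral_Rn (fun y => (\prod_k w k)%:E * f (fun k => w k * y k + c k)%R)
  = integral_Rn f.
Proof.
move=> w0 f0; rewrite /integral_Rn -big_enum /= iint_affine //.
by apply: eq_iint_base => k; rewrite mem_enum.
Qed.

End iterated_integral.

Section gaussian_mixture.
Context (R : realType) (T : finType).
Implicit Types (var mu w y : T -> R) (q : R).

Lemma gauss_ge0 var mu y : 0 <= gauss var mu y.
Proof.
by apply: prodr_ge0 => k _; rewrite mulr_ge0 ?expR_ge0 // invr_ge0 sqrtr_ge0.
Qed.

Lemma gauss_affine var var' mu mu' w y y' :
  (forall k, 0 < w k) -> (forall k, 0 < var k) ->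
  (forall k, var' k = w k ^+ 2 * var k) ->
  (forall k, y' k - mu' k = w k * (y k - mu k)) ->
  gauss var mu y = (\prod_k w k) * gauss var' mu' y'.
Proof.
move=> w0 var0 var'E yE; rewrite /gauss -big_split /=; apply: eq_bigr => k _.
have wk0 := w0 k; have vk0 := var0 k.
have piv0 : 0 < Num.sqrt (2 * pi * var k) by rewrite sqrtr_gt0 !mulr_gt0 // pi_gt0.
rewrite var'E yE.
have -> : 2 * pi * (w k ^+ 2 * var k) = w k ^+ 2 * (2 * pi * var k) by ring.
have -> : - (w k * (y k - mu k)) ^+ 2 / (2 * (w k ^+ 2 * var k)) =
          - (y k - mu k) ^+ 2 / (2 * var k) by field; rewrite !gt_eqF.
rewrite (@sqrtrM _ (w k ^+ 2)) ?sqr_ge0 // sqrtr_sqr gtr0_norm //.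
by rewrite mulrA; congr (_ * _); rewrite invfM mulrA mulfV ?gt_eqF ?mul1r.
Qed.

(* [mixdens] with the family indexed by [nat] through [nth], so that a list and its image
   under [map] share one index type. *)
Definition mixdensn (n : nat) q (F : nat -> T -> R) (shift var y : T -> R) : R :=
  \sum_(m : {ffun 'I_n -> bool})
     (\prod_(i < n) (if m i then q else 1 - q)) *
     gauss var (fun k => shift k + \sum_(i < n | m i) F i k) y.

Lemma mixdensE q (us : seq (T -> R)) shift var y :
  mixdens q us shift var y = mixdensn (size us) q (nth (fun=> 0) us) shift var y.
Proof.
rewrite /mixdens /mixdensn; apply: eq_bigr => m _.
have -> : (fun k => shift k + \sum_(i < size us | m i) tnth (in_tuple us) i k) =
          (fun k => shift k + \sum_(i < size us | m i) nth (fun=> 0) us i k).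
  by apply: funext => k; congr (_ + _); apply: eq_bigr => i _; rewrite (tnth_nth (fun=> 0)).
by [].
Qed.

Lemma mixdensn_ge0 n q F shift var y : 0 <= q <= 1 -> 0 <= mixdensn n q F shift var y.
Proof.
move=> /andP[q0 q1]; apply: sumr_ge0 => m _; rewrite mulr_ge0 ?gauss_ge0 //.
by apply: prodr_ge0 => i _; case: (m i); rewrite ?subr_ge0.
Qed.

Lemma mixdensn_affine n q F F' shift shift' var var' w y y' :
  (forall k, 0 < w k) -> (forall k, 0 < var k) ->
  (forall k, var' k = w k ^+ 2 * var k) ->
  (forall i k, F' i k = w k * F i k) ->
  (forall k, y' k - shift' k = w k * (y k - shift k)) ->
  mixdensn n q F shift var y = (\prod_k w k) * mixdensn n q F' shift' var' y'.
Proof.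
move=> w0 var0 var'E FE yE; rewrite /mixdensn mulr_sumr; apply: eq_bigr => m _.
rewrite (gauss_affine (mu' := fun k => shift' k + \sum_(i < n | m i) F' i k) (y' := y')
  w0 var0 var'E); first by rewrite mulrCA.
move=> k; have -> : \sum_(i < n | m i) F' i k = w k * \sum_(i < n | m i) F i k.
  by rewrite mulr_sumr; apply: eq_bigr => i _; rewrite FE.
by rewrite opprD addrA yE; ring.
Qed.

End gaussian_mixture.

Lemma renyi_affine (R : realType) (T : finType) (lam : R) (p q p' q' : (T -> R) -> R)
    (w c : T -> R) :
  (forall k, 0 < w k) -> (forall y, 0 <= p' y) -> (forall y, 0 <= q' y) ->
  (forall y, p y = (\prod_k w k) * p' (fun k => w k * y k + c k)) ->
  (forall y, q y = (\prod_k w k) * q' (fun k => w k * y k + c k)) ->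
  renyi lam p q = renyi lam p' q'.
Proof.
move=> w0 p'0 q'0 pE qE; set W := \prod_k w k.
have W0 : 0 < W by apply: prodr_gt0 => k _; exact: w0.
have WW : W `^ lam * W `^ (1 - lam) = W.
  by rewrite -powRD ?(gt_eqF W0) ?implybT // addrCA subrr addr0 powRr1 // ltW.
have f0 y : (0 <= (p' y `^ lam * q' y `^ (1 - lam))%:E)%E.
  by rewrite lee_fin mulr_ge0 ?powR_ge0.
rewrite /renyi -(integral_Rn_affine c w0 f0).
suff -> : (fun y => (p y `^ lam * q y `^ (1 - lam))%:E) =
  (fun y => ((\prod_k w k)%:E * (p' (fun k => w k * y k + c k) `^ lam *
                                 q' (fun k => w k * y k + c k) `^ (1 - lam))%:E)%E) by [].
apply: funext => y; rewrite pE qE -EFinM -/W !powRM ?(ltW W0) //.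
by congr (_%:E); rewrite mulrACA WW.
Qed.

Lemma adjacent_ds_map (A B : Type) (f : A -> B) (D D' : seq A) :
  adjacent_ds D D' -> adjacent_ds (map f D) (map f D').
Proof.
case=> x [s1 [s2 adj]]; exists (f x), (map f s1), (map f s2).
by case: adj => -[-> ->]; [left | right]; rewrite !map_cat.
Qed.

Lemma tnth_in_tuple_map (A B : Type) (P : B -> Prop) (f : A -> B) (s : seq A) :
  (forall x, P (f x)) -> forall i, P (tnth (in_tuple (map f s)) i).
Proof.
move=> Pf; have Pnth y0 j : (j < size (map f s))%N -> P (nth y0 (map f s) j).
  by elim: s j => [|x s IH] [|j] //= /IH.
by move=> i; rewrite (tnth_nth (tnth (in_tuple (map f s)) i)); apply: Pnth.
Qed.

Section clipping.
Context (R : realType) (d G : nat) (grp : 'I_d -> 'I_G) (C : 'I_G -> R).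

Lemma sum_clip_sqr_le (v : 'I_d -> R) (g : 'I_G) : 0 < C g ->
  \sum_(k < d | grp k == g) clip grp C v k ^+ 2 <= C g ^+ 2.
Proof.
move=> C0; set N2 := \sum_(k < d | grp k == g) v k ^+ 2.
set M := Num.max 1 (Defs.gnorm grp g v / C g).
have M1 : 1 <= M by rewrite le_max lexx.
have M0 : 0 < M by exact: lt_le_trans M1.
have N0 : 0 <= N2 by apply: sumr_ge0 => k _; exact: sqr_ge0.
have -> : \sum_(k < d | grp k == g) clip grp C v k ^+ 2 = N2 / M ^+ 2.
  by rewrite mulr_suml; apply: eq_bigr => k /eqP gk; rewrite /clip gk expr_div_n.
have normM : Num.sqrt N2 <= C g * M.
  by rewrite mulrC -ler_pdivrMr // le_max lexx orbT.
rewrite ler_pdivrMr ?exprn_gt0 // -(sqr_sqrtr N0) -exprMn.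
by rewrite lerXn2r // ?nnegrE ?sqrtr_ge0 // mulr_ge0 // ltW.
Qed.

End clipping.

Lemma sum_invsqr_gt0 (R : realFieldType) (G : nat) (sigma : 'I_G -> R) :
  (0 < G)%N -> (forall g, 0 < sigma g) -> 0 < \sum_(g < G) (sigma g)^-2.
Proof.
move=> G0 sigma0; pose g0 := Ordinal G0.
have inv_ge0 g : 0 <= (sigma g)^-2 by rewrite invr_ge0 exprn_ge0 // ltW.
rewrite (bigD1 g0) //= ltr_wpDr ?sumr_ge0 // invr_gt0 exprn_gt0 //.
Qed.

Section sma_as_sgm.
Context (R : realType) (X : Type) (d G : nat) (grp : 'I_d -> 'I_G) (C sigma : 'I_G -> R)
  (beta : R).
Hypotheses (G0 : (0 < G)%N) (C0 : forall g, 0 < C g) (sigma0 : forall g, 0 < sigma g)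
  (beta0 : 0 < beta).
Local Notation s := (sigma_eff beta sigma).

Lemma sigma_eff_gt0 : 0 < s.
Proof. by rewrite invr_gt0 mulr_gt0 // sqrtr_gt0 sum_invsqr_gt0. Qed.

Definition sgm_weight (k : 'I_d) : R := s / (sigma (grp k) * C (grp k)).

Lemma sgm_weight_gt0 k : 0 < sgm_weight k.
Proof. by rewrite divr_gt0 ?sigma_eff_gt0 ?mulr_gt0. Qed.

Definition sgm_rescale (u : 'I_d -> R) (k : 'I_d) : R := sgm_weight k * u k.

Lemma l2norm_rescale_clip_le1 (v : 'I_d -> R) :
  l2norm (sgm_rescale (fun k => beta * clip grp C v k)) <= 1.
Proof.
have sbS : s ^+ 2 * beta ^+ 2 * \sum_(g < G) (sigma g)^-2 = 1.
  have S0 := sum_invsqr_gt0 G0 sigma0.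
  rewrite exprVn exprMn sqr_sqrtr ?ltW //.
  by field; rewrite !gt_eqF.
rewrite /l2norm -sqrtr1 ler_wsqrtr // (partition_big grp xpredT) //= -sbS mulr_sumr.
apply: ler_sum => g _.
have -> : \sum_(k < d | grp k == g) sgm_rescale (fun k => beta * clip grp C v k) k ^+ 2 =
    (s * beta / (sigma g * C g)) ^+ 2 * \sum_(k < d | grp k == g) clip grp C v k ^+ 2.
  rewrite mulr_sumr; apply: eq_bigr => k /eqP <-.
  by rewrite /sgm_rescale /sgm_weight -!exprMn; congr (_ ^+ 2); ring.
apply: le_trans (ler_wpM2l (sqr_ge0 _) (sum_clip_sqr_le grp v (C0 g))) _.
have := sigma0 g; have := C0 g => Cg sg.
by rewrite [leLHS](_ : _ = s ^+ 2 * beta ^+ 2 * (sigma g)^-2) //; field; rewrite !gt_eqF.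
Qed.

Variables (q : R) (grad : X -> 'I_d -> R) (b : 'I_d -> R).
Hypothesis q01 : 0 <= q <= 1.

Definition sma_contrib (x : X) (k : 'I_d) : R := beta * clip grp C (grad x) k.

Definition sgm_dens (D : seq X) : ('I_d -> R) -> R :=
  mixdens q (map sgm_rescale (map sma_contrib D)) (fun=> 0) (fun=> s ^+ 2).

Lemma sma_densE (D : seq X) y :
  sma_dens grp C sigma beta q grad b D y =
  (\prod_k sgm_weight k) * sgm_dens D (fun k => sgm_weight k * y k + - (sgm_weight k * b k)).
Proof.
rewrite /sma_dens /sgm_dens !mixdensE !size_map.
apply: mixdensn_affine => [k|k|k|i k|k]; first exact: sgm_weight_gt0.
- by rewrite mulr_gt0 ?exprn_gt0.
- have := sigma0 (grp k); have := C0 (grp k) => Cg sg.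
  by rewrite /sgm_weight; field; rewrite !gt_eqF.
- have [lt_iD|le_Di] := ltnP i (size D).
    by rewrite !(nth_map (fun=> 0)) ?size_map // (nth_map (fun=> 0)).
  by rewrite !nth_default ?size_map // /sgm_rescale mulr0.
- by rewrite subr0 mulrBr.
Qed.

Lemma renyi_sma_densE (lam : R) (D D' : seq X) :
  renyi lam (sma_dens grp C sigma beta q grad b D) (sma_dens grp C sigma beta q grad b D')
  = renyi lam (sgm_dens D) (sgm_dens D').
Proof.
have dens_ge0 E y : 0 <= sgm_dens E y by rewrite /sgm_dens mixdensE mixdensn_ge0.
exact: renyi_affine _ sgm_weight_gt0 (dens_ge0 D) (dens_ge0 D') (sma_densE D) (sma_densE D').
Qed.

End sma_as_sgm.

Theorem theoremB2 (R : realType) (X : Type) (d G : nat) (grp : 'I_d -> 'I_G)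
  (C sigma : 'I_G -> R) (beta q : R) (grad : X -> 'I_d -> R) (b : 'I_d -> R)
  (eps_SGM : R -> R -> R -> R) :
  (0 < G)%N ->
  (forall g, 0 < C g) ->
  (forall g, 0 < sigma g) ->
  0 < beta <= 1 ->
  0 <= q <= 1 ->
  (forall lam q' s, 1 < lam -> 0 <= q' <= 1 -> 0 < s ->
     SGM_rdp_bound lam q' s (eps_SGM lam q' s)) ->
  forall lam : R, 1 < lam ->
  forall D D' : seq X, adjacent_ds D D' ->
  (renyi lam (sma_dens grp C sigma beta q grad b D)
             (sma_dens grp C sigma beta q grad b D')
     <= (eps_SGM lam q (sigma_eff beta sigma))%:E)%E.
Proof.
move=> G0 C0 sigma0 /andP[beta0 _] q01 sgm_rdp lam lam1 D D' adj.
rewrite renyi_sma_densE //; apply: sgm_rdp => //.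
- exact: sigma_eff_gt0.
- by do 2!apply: adjacent_ds_map.
- rewrite -!map_cat -map_comp.
  apply: (tnth_in_tuple_map (P := fun u => l2norm u <= 1)) => x.
  exact: l2norm_rescale_clip_le1.
Qed.
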